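(* Let $X$ be a real topological vector space, let $C$ be a non-empty subset of $X$, and let $f:X\times X\to\mathbb{R}$ be a bifunction. Then $f$ is cyclically quasi-monotone on $C$ if and only if for every finite non-empty subset $A$ of $C$ there exists $x\in A$ such that \[ \max_{a\in A} f(a,x)\leq 0. \]
   Context: A bifunction $f:X\times X\to\mathbb{R}$ is called cyclically quasi-monotone on $C$ if for every $n\in\mathbb{N}$ and all $x_0,x_1,\dots,x_n\in C$ there exists $i\in\{0,1,\dots,n\}$ such that $f(x_i,x_{i+1})\leq 0$, where $x_{n+1}:=x_0$. *)

From HB Require Import structures.
From mathcomp Require Import all_boot all_order all_algebra.
From mathcomp Require Import boolp classical_sets cardinality reals.
From mathcomp Require Import Rstruct tvs.
Set Implicit Arguments. Unset Strict Implicit. Unset Printing Implicit Defensive.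
Import Order.TTheory GRing.Theory Num.Theory.
Local Open Scope classical_set_scope.
Local Open Scope ring_scope.

Definition cyclically_quasi_monotone (R : numDomainType) (X : Type)
    (f : X -> X -> R) (C : set X) : Prop :=
  forall (n : nat) (x : nat -> X),
    (forall i, (i <= n)%N -> C (x i)) ->
    exists i, (i <= n)%N /\ f (x i) (if i == n then x 0%N else x i.+1) <= 0.

From HB Require Import structures.
From mathcomp Require Import all_boot all_order all_algebra.
From mathcomp Require Import boolp classical_sets cardinality reals.
From mathcomp Require Import Rstruct tvs.
From mathcomp Require Import zify.
Set Implicit Arguments. Unset Strict Implicit. Unset Printing Implicit Defensive.
Import Order.TTheory GRing.Theory Num.Theory.
Local Open Scope classical_set_scope.
Local Open Scope ring_scope.

(* If a finite A ⊆ C had no x with f(a, x) <= 0 for all a in A, every x in A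
   would have a predecessor a in A with ~ f(a, x) <= 0.  Iterating the
   predecessor map inside the finite set A revisits a point, and the loop so
   traced, read backwards, is a cycle on which f is nowhere <= 0.  Conversely,
   the condition applied to {x_0, ..., x_n} yields some x_j with
   f(x_(j-1), x_j) <= 0, indices taken mod n+1. *)

Lemma finite_set_repeat (T : Type) (A : set T) (y : nat -> T) :
  finite_set A -> (forall k, A (y k)) -> exists p q, (p < q)%N /\ y p = y q.
Proof.
move=> finA Ay; apply: contrapT => norep; apply: infinite_nat.
have -> : [set: nat] = y @^-1` A by apply/seteqP; split=> k // _; exact: Ay.
apply: finite_preimage finA => p q _ _ ypq.
by case: (ltngtP p q) => // [pq|qp]; exfalso; apply: norep;
  [exists p, q | exists q, p].
Qed.

Section CyclicQuasiMonotone.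
Variables (R : numDomainType) (X : Type) (f : X -> X -> R) (C : set X).

Lemma cyclically_quasi_monotone_rev_loop (y : nat -> X) (p q : nat) :
  cyclically_quasi_monotone f C -> (forall k, C (y k)) ->
  (p < q)%N -> y p = y q ->
  exists k, (p <= k < q)%N /\ f (y k.+1) (y k) <= 0.
Proof.
move=> fC Cy pq ypq.
(* the cycle y q, y (q-1), ..., y (p+1) closes up at y q = y p *)
have [i [le_in]] := fC (q - p).-1 (fun i => y (q - i)%N) (fun i _ => Cy _).
case: eqP => [->|ne_in] fi.
- exists p; split; first by lia.
  by rewrite ypq -(subn0 q); have -> : p.+1 = (q - (q - p).-1)%N by lia.
- exists (q - i.+1)%N; split; first by lia.
  by have -> : (q - i.+1).+1 = (q - i)%N by lia.
Qed.

Lemma cyclically_quasi_monotone_finite_max (A : set X) :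
  cyclically_quasi_monotone f C ->
  finite_set A -> A !=set0 -> A `<=` C ->
  exists2 x, A x & forall a, A a -> f a x <= 0.
Proof.
move=> fC finA [a0 Aa0] AC; apply: contrapT => nomax.
have pred x : exists a, A x -> A a /\ ~ f a x <= 0.
  have [Ax|] := pselect (A x); last by exists a0.
  have /existsNP[a /not_implyP[Aa fax]] : ~ (forall a, A a -> f a x <= 0).
    by move=> max; apply: nomax; exists x.
  by exists a.
have [g gP] := choice pred.
pose y k := iter k g a0.
have Ay k : A (y k) by elim: k => //= k IH; case: (gP _ IH).
have [p [q [pq ypq]]] := finite_set_repeat finA Ay.
have [k [_ fk]] := cyclically_quasi_monotone_rev_loop fC (fun k => AC _ (Ay k)) pq ypq.
by case: (gP _ (Ay k)).
Qed.

Lemma finite_max_cyclically_quasi_monotone :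
  (forall A : set X, finite_set A -> A !=set0 -> A `<=` C ->
     exists2 x, A x & forall a, A a -> f a x <= 0) ->
  cyclically_quasi_monotone f C.
Proof.
move=> fmax n x Cx.
have ne : x @` `I_n.+1 !=set0 by exists (x 0%N), 0%N.
have sub : x @` `I_n.+1 `<=` C by move=> _ [k kn <-]; apply: Cx.
have [_ [[|j] jn <-] fj] := fmax _ (finite_image _ (finite_II n.+1)) ne sub.
- by exists n; rewrite eqxx; split => //; apply: fj; exists n => /=.
- have lt_jn : (j < n)%N := jn.
  exists j; split; first exact: ltnW.
  by rewrite ltn_eqF //; apply: fj; exists j => //; apply: ltnW.
Qed.

End CyclicQuasiMonotone.

Theorem proposition2p1 (X : tvsType Rdefinitions.R) (C : set X)
    (f : X -> X -> Rdefinitions.R) :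
  C !=set0 ->
  (cyclically_quasi_monotone f C <->
   forall A : set X, finite_set A -> A !=set0 -> A `<=` C ->
     exists2 x, A x & forall a, A a -> f a x <= 0).
Proof.
move=> _; split; last exact: finite_max_cyclically_quasi_monotone.
by move=> fC A; apply: cyclically_quasi_monotone_finite_max.
Qed.
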